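(* Fix $\gamma\in[0,1]$. Let $\widetilde X=(\widetilde x_{a,o})$ be the uncapped guiding fractional process obtained by running EFTT with threshold $\gamma$ (described in the context), and let $X$ be the integral matching produced by the following rounding scheme: when item $o$ arrives, feed the vector $(\widetilde x_{a,o})_{a\in N}$ to an online correlated selection (OCS) algorithm (described in the context), match $o$ to the selected agent if that agent is unmatched, and otherwise match $o$ to an arbitrary unmatched agent who likes it (if one exists). Then for every class $i\in[k]$, \[\mathbb{E}[V_i(X)]\ge\rho(\gamma)\cdot\mathrm{prop}_i,\qquad \rho(\gamma)=\int_0^\gamma e^{-\theta}p'(\theta)\,d\theta,\qquad p(t)=1-\exp\!\left(-t-\tfrac12t^2-\tfrac{4-2\sqrt3}{3}t^3\right).\] Hence the algorithm is $\rho(\gamma)$-CPROP in expectation.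
   Context: Online class matching: an instance is a bipartite graph $G=(N,M,E)$ with known agents $N$, items $M$, $E\subseteq M\times N$ ($a$ likes $o$ iff $(o,a)\in E$); agents are partitioned into $k$ known classes $N_1,\dots,N_k$. Items arrive one at a time in adversarial order; upon arrival of $o$ its set of liking agents is revealed and $o$ must be irrevocably matched to at most one currently unmatched agent liking it. For a (fractional or integral) matching $X=(x_{o,a})$, $V_i(X)=\sum_{a\in N_i}\sum_o x_{o,a}$ and $y_j(X)\in[0,1]^M$ has $y_j(X)_o=\sum_{a\in N_j}x_{o,a}$. For $y\in[0,1]^M$, $V_i^*(y)$ is the maximum size of a fractional matching using edges of $E$ between $N_i$ and $M$ with degree at most $y_o$ at each item $o$ and at most $1$ at each agent. The proportional share of class $i$ is $\mathrm{prop}_i=\max_X\min_{j\in[k]}V_i^*(y_j(X))$, the maximum over all fractional matchings $X$ of $G$. An algorithm is $\alpha$-CPROP in expectation if $\mathbb{E}[V_i(X)]\ge\alpha\,\mathrm{prop}_i$ for every class $i$. Uncapped EFTT with threshold $\gamma$: a continuous water-filling process producing loads $\widetilde x_{a,o}\ge0$ in which agents have no capacity bound (the load $\sum_o\widetilde x_{a,o}$ may exceed $1$). Upon arrival of $o$: Phase I: let $Z_\gamma$ be the set of classes with at least one agent liking $o$ of current load less than $\gamma$; while $Z_\gamma\neq\emptyset$ and $o$ is not fully assigned, continuously assign mass of $o$ split equally among the classes in $Z_\gamma$, within each class to the agent(s) liking $o$ of minimum current load, removing a class from $Z_\gamma$ once it has no agent liking $o$ with load below $\gamma$. Phase II: once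 $Z_\gamma=\emptyset$, continuously assign the remaining mass of $o$ to the agent(s) liking $o$ with smallest current load until $o$ is fully assigned. OCS: an online algorithm which at each step receives a nonnegative vector $(\widetilde x_{a,o})_{a\in N}$ for some item $o$ with $\sum_a\widetilde x_{a,o}\le1$ and selects an agent $a$ with $\widetilde x_{a,o}>0$, such that by the end each agent $a$ has been selected at least once with probability at least $p(\widetilde x_a)$, where $\widetilde x_a=\sum_o\widetilde x_{a,o}$ and $p$ is as in the claim. *)

From HB Require Import structures.
From mathcomp Require Import all_boot all_order all_algebra.
From mathcomp Require Import all_classical all_reals all_analysis.
Set Implicit Arguments. Unset Strict Implicit. Unset Printing Implicit Defensive.
Import Order.TTheory GRing.Theory Num.Theory.
Import numFieldNormedType.Exports.
Local Open Scope classical_set_scope.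
Local Open Scope ring_scope.

(* Conventions.
   - Agents form a finite type [A]; classes are ['I_k], [cls a] is the class of a.
   - Items are ['I_m]; WLOG items are labelled by arrival time: item [o]
     arrives at step [o] (the adversarial order is absorbed by quantifying
     over all graphs).
   - [likes a o] : agent a likes item o, i.e. (o,a) \in E. *)

Section Defs.
Variables (R : realType) (k m : nat) (A : finType).
Variables (cls : A -> 'I_k) (likes : A -> 'I_m -> bool).

Definition frac_matching (x : 'I_m -> A -> R) : Prop :=
  [/\ (forall o a, 0 <= x o a),
      (forall o a, ~~ likes a o -> x o a = 0),
      (forall o, \sum_(a : A) x o a <= 1) &
      (forall a, \sum_(o : 'I_m) x o a <= 1)].

Definition yvec (j : 'I_k) (x : 'I_m -> A -> R) : 'I_m -> R :=
  fun o => \sum_(a : A | cls a == j) x o a.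

Definition Vstar (i : 'I_k) (y : 'I_m -> R) : R :=
  sup [set v : R | exists z : 'I_m -> A -> R,
    [/\ (forall o a, 0 <= z o a),
        (forall o a, ~~ (likes a o && (cls a == i)) -> z o a = 0),
        (forall o, \sum_(a : A) z o a <= y o),
        (forall a, \sum_(o : 'I_m) z o a <= 1) &
        v = \sum_(o : 'I_m) \sum_(a : A) z o a]].

(* min_{j in [k]} f j, computed as a fold of Num.min seeded with f i
   (i : 'I_k is a class, so the seed is one of the values and the result is
   exactly the minimum over all j). *)
Definition min_classes (i : 'I_k) (f : 'I_k -> R) : R :=
  \big[Num.min/f i]_(j < k) f j.

Definition prop_share (i : 'I_k) : R :=
  sup [set v : R | exists x : 'I_m -> A -> R,
    frac_matching x /\ v = min_classes i (fun j => Vstar i (yvec j x))].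

(* Phase-I capacity of class c for the current item: the mass class c can
   absorb before all its agents liking the item reach load gamma. *)
Definition capI (gamma : R) (L : A -> R) (lik : A -> bool) (c : 'I_k) : R :=
  \sum_(a : A | lik a && (cls a == c)) Num.max 0 (gamma - L a).

(* One arrival of uncapped EFTT: [L] = current loads, [lik] = agents liking the
   item, [x a] = mass of the item assigned to a.  The continuous water-filling
   is described by its outcome:
   Phase I: every class in Z_gamma receives mass at the same rate until it
   leaves Z_gamma, so class c receives min(tau, capI c) for a common tau,
   until the item is fully assigned or all classes have left; inside a class
   the mass is water-filled to the min-load agents (common level lam c).
   Phase II: the remaining mass is water-filled (level mu) over all agents
   liking the item. *)
Definition EFTT_step (gamma : R) (L : A -> R) (lik : A -> bool)
    (x : A -> R) : Prop :=
  exists (tau : R) (lam : 'I_k -> R) (mu : R) (x1 x2 : A -> R),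
  [/\ 0 <= tau,
      \sum_(c < k) Num.min tau (capI gamma L lik c)
        = Num.min 1 (\sum_(c < k) capI gamma L lik c),
      (forall c, \sum_(a : A | lik a && (cls a == c)) x1 a
                   = Num.min tau (capI gamma L lik c)),
      (forall a, lik a -> x1 a = Num.max 0 (lam (cls a) - L a)) &
      (forall a, lik a -> x2 a = Num.max 0 (mu - (L a + x1 a)))] /\
  [/\
      ((exists a, lik a) -> \sum_(a : A | lik a) x2 a
                   = 1 - Num.min 1 (\sum_(c < k) capI gamma L lik c)) &
      (forall a, x a = if lik a then x1 a + x2 a else 0)].

Definition is_EFTT (gamma : R) (xt : A -> 'I_m -> R) : Prop :=
  forall o : 'I_m,
    EFTT_step gamma (fun a => \sum_(o' < m | (o' < o)%N) xt a o')
              (fun a => likes a o) (fun a => xt a o).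

Definition p_ocs (t : R) : R :=
  1 - expR (- (t + t ^+ 2 / 2 + (4 - 2 * Num.sqrt 3) / 3 * t ^+ 3)).

Definition rho (gamma : R) : \bar R :=
  let I01 : set R := `[0, gamma]%classic in
  (\int[@lebesgue_measure R]_(t in I01)
      (expR (- t) * (derive1 p_ocs t))%:E)%E.

Variables (d : measure_display) (Omega : measurableType d)
          (P : probability Omega R).

(* sel o w : the agent selected by the OCS when item o (with vector
   (xt a o)_a) is fed to it, under randomness w (None only if the vector is
   zero). *)
Definition is_OCS_run (xt : A -> 'I_m -> R) (sel : 'I_m -> Omega -> option A)
  : Prop :=
  [/\ (forall o a, measurable [set w | sel o w = Some a]),
      (forall o w a, sel o w = Some a -> 0 < xt a o),
      (forall o w, (exists a, 0 < xt a o) -> sel o w != None) &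
      (forall a, ((p_ocs (\sum_(o < m) xt a o))%:E
                   <= P [set w | exists o, sel o w = Some a])%E)].

Definition matched_before (mt : 'I_m -> Omega -> option A) (w : Omega)
    (a : A) (o : 'I_m) : bool :=
  [exists o' : 'I_m, (o' < o)%N && (mt o' w == Some a)].

Definition is_rounding (sel mt : 'I_m -> Omega -> option A) : Prop :=
  forall o w,
    match sel o w with
    | Some a => ~~ matched_before mt w a o -> mt o w = Some a
    | None => True
    end /\
    ((forall a, sel o w = Some a -> matched_before mt w a o) ->
     if [exists b, likes b o && ~~ matched_before mt w b o]
     then exists b, [/\ likes b o, ~~ matched_before mt w b o & mt o w = Some b]
     else mt o w = None).

Definition Vclass (mt : 'I_m -> Omega -> option A) (i : 'I_k) (w : Omega) : R :=
  \sum_(o < m) \sum_(a : A | cls a == i) (mt o w == Some a)%:R.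

End Defs.

From mathcomp Require Import all_boot all_order all_algebra.
From mathcomp Require Import all_classical all_reals all_analysis.
From mathcomp Require Import measurable_realfun ring lra.
Set Implicit Arguments.
Unset Strict Implicit.
Unset Printing Implicit Defensive.
Import Order.TTheory GRing.Theory Num.Theory.
Import numFieldNormedType.Exports.
Local Open Scope classical_set_scope.
Local Open Scope ring_scope.

(* A primal-dual argument.  Let r = rho(gamma) = Phi(gamma), where
   Phi(t) = int_0^t e^-s p'(s) ds, and split p = f + g with
   f(t) = e^t (Phi(t) - r) + r.  Since e^-t p'(t) is nonincreasing on [0, 1],
   f is nondecreasing on [0, gamma] with f(0) = 0 and f(gamma) = r, and
   g' = r - f >= 0 there.  With x_a = sum_o xt_{a,o}, give agent a of
   class i the price beta_a = f(min(x_a, gamma)), and item o the price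
   alpha_o = k times the increase of g(min(load, gamma)) over the class-i
   agents while o is assigned.  Then beta_a + alpha_o >= r on every class-i
   edge: either a reaches gamma, or Phase I never saturates class i, so that
   class receives at least 1/k of o at loads below x_a, where g grows at rate
   r - f(x_a).  Weak duality for each V_i^*(y_j(X)), averaged over j, gives
   k r prop_i <= k sum beta + sum alpha, which telescopes to
   k sum_{a in N_i} p(min(x_a, gamma)).  Finally every agent selected by the
   OCS is matched, so E[V_i] >= sum_{a in N_i} p(x_a). *)

Section OCSFunction.
Variable R : realType.
Local Notation mu := (@lebesgue_measure R).

Definition ocs_coef : R := (4 - 2 * Num.sqrt 3) / 3.
Definition q_ocs (t : R) : R := t + t ^+ 2 / 2 + ocs_coef * t ^+ 3.
Definition dq_ocs (t : R) : R := 1 + t + 3 * ocs_coef * t ^+ 2.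
Definition dp_ocs (t : R) : R := expR (- q_ocs t) * dq_ocs t.
Definition rho_density (t : R) : R := expR (- t) * dp_ocs t.
Definition rho_int (t : R) : R := Rintegral mu `[0, t] rho_density.

Lemma ocs_coef_ge0 : 0 <= ocs_coef.
Proof.
have s3 : Num.sqrt (3 : R) ^+ 2 = 3 by rewrite sqr_sqrtr.
by rewrite /ocs_coef divr_ge0 //; nra.
Qed.

Lemma ocs_coef_le : 3 * ocs_coef <= 1.
Proof.
have s3 : Num.sqrt (3 : R) ^+ 2 = 3 by rewrite sqr_sqrtr.
have := sqrtr_ge0 (3 : R).
rewrite /ocs_coef mulrC -mulrA mulVf ?pnatr_eq0 // mulr1; nra.
Qed.

Lemma is_derive_q_ocs (t : R) : is_derive t 1 q_ocs (dq_ocs t).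
Proof.
have dt := is_derive_id t (1 : R).
apply: (is_derive_eq (is_deriveD (is_deriveD dt
  (is_deriveM (is_deriveX 2 dt) (is_derive_cst (2^-1 : R) t 1)))
  (is_deriveM (is_derive_cst ocs_coef t 1) (is_deriveX 3 dt)))).
rewrite /dq_ocs /= /GRing.scale /= !mulr0 !addr0 !mulr1 expr1 mulrA.
rewrite mulVf ?pnatr_eq0 // mul1r; ring.
Qed.

Lemma is_derive_p_ocs (t : R) : is_derive t 1 (@p_ocs R) (dp_ocs t).
Proof.
have dexp := @is_derive1_comp R expR (- q_ocs) t _ _
  (is_derive_expR (- q_ocs t)) (is_deriveN (is_derive_q_ocs t)).
apply: (is_derive_eq (is_deriveB (is_derive_cst (1 : R) t 1) dexp)).
rewrite /dp_ocs /=; ring.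
Qed.

Lemma derive1_p_ocs (t : R) : derive1 (@p_ocs R) t = dp_ocs t.
Proof. by have dp := is_derive_p_ocs t; rewrite derive1E derive_val. Qed.

Lemma continuous_p_ocs : continuous (@p_ocs R).
Proof.
move=> x; apply/differentiable_continuous/derivable1_diffP.
by have dp := is_derive_p_ocs x; exact: ex_derive.
Qed.

Lemma p_ocs0 : p_ocs (0 : R) = 0.
Proof. by rewrite /p_ocs !expr0n /= mul0r mulr0 !addr0 oppr0 expR0 subrr. Qed.

Lemma le_p_ocs (s t : R) : 0 <= s -> s <= t -> p_ocs s <= p_ocs t.
Proof.
move=> s0 st; rewrite /p_ocs lerD2l lerN2 ler_expR lerN2.
have s2 : s ^+ 2 <= t ^+ 2 by rewrite lerXn2r // nnegrE; lra.
have s3 : s ^+ 3 <= t ^+ 3 by rewrite lerXn2r // nnegrE; lra.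
have := ler_wpM2l ocs_coef_ge0 s3; rewrite -/ocs_coef; lra.
Qed.

Lemma continuous_rho_density : continuous rho_density.
Proof.
move=> x; apply/differentiable_continuous/derivable1_diffP.
have -> : rho_density = (expR \o -%R) * ((expR \o (- q_ocs)) *
    (cst 1 + id + cst (3 * ocs_coef) * id ^+ 2)).
  by apply/funext => t; rewrite /rho_density /dp_ocs /dq_ocs.
exact: ex_derive.
Qed.

Lemma dq_ocs_ge1 (t : R) : 0 <= t -> 1 <= dq_ocs t.
Proof. have := ocs_coef_ge0; rewrite /dq_ocs => c0 t0; nra. Qed.

Lemma rho_density_ge0 (t : R) : 0 <= t -> 0 <= rho_density t.
Proof.
move=> t0; have dq1 := dq_ocs_ge1 t0.
by rewrite /rho_density /dp_ocs !mulr_ge0 ?expR_ge0 //; lra.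
Qed.

(* The only property of the cubic coefficient c used is 3 c <= 1. *)
Lemma dq_ocs_le (s t : R) : 0 <= s -> s <= t -> t <= 1 ->
  dq_ocs t <= (1 + ((t + q_ocs t) - (s + q_ocs s))) * dq_ocs s.
Proof.
have c0 := ocs_coef_ge0; have c1 := ocs_coef_le => s0 st t1.
have s2 : s ^+ 2 <= t ^+ 2 by rewrite lerXn2r // nnegrE; lra.
have s3 : s ^+ 3 <= t ^+ 3 by rewrite lerXn2r // nnegrE; lra.
have hq : t - s <= q_ocs t - q_ocs s.
  have : 0 <= ocs_coef * (t ^+ 3 - s ^+ 3) by apply: mulr_ge0; lra.
  rewrite /q_ocs; lra.
have hdq : 1 + s <= dq_ocs s by rewrite /dq_ocs; nra.
have -> : dq_ocs t = dq_ocs s + (t - s) * (1 + 3 * ocs_coef * (t + s)).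
  by rewrite /dq_ocs; ring.
have : (t - s) * (1 + 3 * ocs_coef * (t + s)) <= (2 * (t - s)) * (1 + s).
  have -> : 2 * (t - s) * (1 + s) = (t - s) * (2 * (1 + s)) by ring.
  apply: ler_wpM2l; [lra | nra].
have : (2 * (t - s)) * (1 + s) <= ((t + q_ocs t) - (s + q_ocs s)) * dq_ocs s.
  by apply: ler_pM; lra.
lra.
Qed.

Lemma rho_density_nonincr (s t : R) : 0 <= s -> s <= t -> t <= 1 ->
  rho_density t <= rho_density s.
Proof.
move=> s0 st t1.
have E x : rho_density x = expR (- (x + q_ocs x)) * dq_ocs x.
  by rewrite /rho_density /dp_ocs mulrA -expRD (opprD x).
rewrite !E; set D := (t + q_ocs t) - (s + q_ocs s).
have key : dq_ocs t <= expR D * dq_ocs s.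
  apply: le_trans (dq_ocs_le s0 st t1) _.
  apply: ler_wpM2r; last exact: expR_ge1Dx.
  exact: le_trans ler01 (dq_ocs_ge1 s0).
have -> : - (t + q_ocs t) = - (s + q_ocs s) - D by rewrite /D; ring.
rewrite expRD -mulrA ler_pM2l ?expR_gt0 // expRN.
rewrite -(ler_pM2l (expR_gt0 D)) mulrA mulfV ?gt_eqF ?expR_gt0 // mul1r.
exact: key.
Qed.

Lemma integrable_rho_density (a b : R) :
  mu.-integrable `[a, b] (EFin \o rho_density).
Proof.
apply: continuous_compact_integrable; first exact: segment_compact.
exact/continuous_subspaceT/continuous_rho_density.
Qed.

Lemma rho_int0 : rho_int 0 = 0.
Proof. by rewrite /rho_int set_itv1 Rintegral_set1. Qed.

Lemma continuous_rho_int (b : R) : 0 <= b ->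
  {within `[0, b], continuous rho_int}.
Proof.
move=> b0.
exact: parameterized_integral_continuous b0 (integrable_rho_density 0 b).
Qed.

Lemma is_derive_rho_int (x b : R) : 0 < x -> x < b ->
  is_derive x 1 rho_int (rho_density x).
Proof.
move=> x0 xb.
have [dPhi <-] := continuous_FTC1_closed xb (integrable_rho_density 0 b) x0
  (@continuous_rho_density x).
by rewrite derive1E; exact: derivableP.
Qed.

Lemma rhoE (gamma : R) : rho gamma = (rho_int gamma)%:E.
Proof.
rewrite /rho /rho_int /Rintegral.
have -> : (fun t => (expR (- t) * derive1 (@p_ocs R) t)%:E) =
    EFin \o rho_density.
  by apply/funext => t; rewrite derive1_p_ocs.
by rewrite fineK // (integrable_fin_num _ (integrable_rho_density 0 gamma)).
Qed.

End OCSFunction.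

Section GainSplit.
Variables (R : realType) (gamma : R).
Hypotheses (gamma_ge0 : 0 <= gamma) (gamma_le1 : gamma <= 1).
Local Notation r := (rho_int gamma).

Definition agent_gain (t : R) : R := expR t * (rho_int t - r) + r.
Definition item_gain (t : R) : R := p_ocs t - agent_gain t.

Lemma agent_gain0 : agent_gain 0 = 0.
Proof. by rewrite /agent_gain rho_int0 expR0 mul1r add0r addNr. Qed.

Lemma agent_gain_gamma : agent_gain gamma = r.
Proof. by rewrite /agent_gain subrr mulr0 add0r. Qed.

Lemma item_gain0 : item_gain 0 = 0.
Proof. by rewrite /item_gain agent_gain0 p_ocs0 subr0. Qed.

Lemma agent_gainE : agent_gain = expR * (@rho_int R - cst r) + cst r.
Proof. by []. Qed.

Lemma is_derive_agent_gain (x : R) : 0 < x -> x < gamma ->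
  is_derive x 1 agent_gain (expR x * (rho_int x - r + rho_density x)).
Proof.
move=> x0 xg.
rewrite agent_gainE.
apply: (is_derive_eq (is_deriveD (is_deriveM (is_derive_expR x)
  (is_deriveB (is_derive_rho_int x0 xg) (is_derive_cst r x 1)))
  (is_derive_cst r x 1))).
rewrite /= /GRing.scale /= (_ : (@rho_int R - cst r) x = rho_int x - r) //.
ring.
Qed.

Lemma continuous_agent_gain : {within `[0, gamma], continuous agent_gain}.
Proof.
rewrite agent_gainE => x; apply: continuousD; last exact: cst_continuous.
apply: continuousM.
  exact: (continuous_subspaceT (fun y => @continuous_expR R y)).
by apply: continuousB; [exact: continuous_rho_int | exact: cst_continuous].
Qed.

(* r - rho_int t is the integral of the density over [t, gamma], an interval
   of length at most 1 on which the density is at most its value at t. *)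
Lemma agent_gain_deriv_ge0 (t : R) : 0 < t -> t < gamma ->
  0 <= expR t * (rho_int t - r + rho_density t).
Proof.
move=> t0 tg; have g1 := gamma_le1; rewrite mulr_ge0 ?expR_ge0 //.
have dint x : x \in `]t, gamma[ -> is_derive x 1 (@rho_int R) (rho_density x).
  by move=> /[!in_itv]/= /andP[tx xg]; apply: is_derive_rho_int xg; lra.
have sub : `[t, gamma] `<=` `[0, gamma].
  by apply: subset_itvScc; rewrite bnd_simp // ltW.
have [c /[!in_itv]/= /andP[tc cg] mvt] := MVT tg dint
  (continuous_subspaceW sub (continuous_rho_int gamma_ge0)).
have dct : rho_density c <= rho_density t.
  by apply: rho_density_nonincr; lra.
have : rho_density c * (gamma - t) <= rho_density c.
  by rewrite ler_piMr ?rho_density_ge0 //; lra.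
lra.
Qed.

Lemma le_agent_gain (x y : R) : 0 <= x -> x <= y -> y <= gamma ->
  agent_gain x <= agent_gain y.
Proof.
apply: ger0_derive1_ndecr; last exact: continuous_agent_gain.
  move=> z /[!in_itv]/= /andP[z0 zg].
  by have dg := is_derive_agent_gain z0 zg; exact: ex_derive.
move=> z /[!in_itv]/= /andP[z0 zg].
have dg := is_derive_agent_gain z0 zg.
by rewrite derive1E derive_val; exact: agent_gain_deriv_ge0.
Qed.

Lemma agent_gain_ge0 (x : R) : 0 <= x -> x <= gamma -> 0 <= agent_gain x.
Proof. by move=> x0 xg; rewrite -agent_gain0; apply: le_agent_gain. Qed.

Lemma agent_gain_le (x : R) : 0 <= x -> x <= gamma -> agent_gain x <= r.
Proof. by move=> x0 xg; rewrite -agent_gain_gamma; apply: le_agent_gain. Qed.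

Lemma rho_int_ge0 : 0 <= r.
Proof. by rewrite -agent_gain_gamma agent_gain_ge0. Qed.

Lemma is_derive_item_gain (x : R) : 0 < x -> x < gamma ->
  is_derive x 1 item_gain (r - agent_gain x).
Proof.
move=> x0 xg.
apply: (is_derive_eq (is_deriveB (is_derive_p_ocs x)
  (is_derive_agent_gain x0 xg))).
have e : expR x * rho_density x = dp_ocs x.
  by rewrite /rho_density mulrA -expRD subrr expR0 mul1r.
by rewrite mulrDr e /agent_gain; ring.
Qed.

Lemma continuous_item_gain : {within `[0, gamma], continuous item_gain}.
Proof.
move=> x; apply: continuousB; last exact: continuous_agent_gain.
exact: (continuous_subspaceT (@continuous_p_ocs R)).
Qed.

Lemma item_gain_increment (s e t : R) :
  0 <= s -> s <= e -> e <= t -> t <= gamma ->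
  (e - s) * (r - agent_gain t) <= item_gain e - item_gain s.
Proof.
move=> s0 se et tg.
have dG x : x \in `]s, e[ -> is_derive x 1 item_gain (r - agent_gain x).
  by move=> /[!in_itv]/= /andP[sx xe]; apply: is_derive_item_gain; lra.
have sub : `[s, e] `<=` `[0, gamma].
  by apply: subset_itvScc; rewrite bnd_simp // (le_trans et tg).
have [c /[!in_itv]/= /andP[sc ce] ->] := MVT_segment se dG
  (continuous_subspaceW sub continuous_item_gain).
rewrite mulrC ler_wpM2r ?subr_ge0 // lerD2l lerN2.
by apply: le_agent_gain; lra.
Qed.

Lemma le_item_gain (s e : R) : 0 <= s -> s <= e -> e <= gamma ->
  item_gain s <= item_gain e.
Proof.
move=> s0 se eg; rewrite -subr_ge0.
apply: le_trans (item_gain_increment s0 se (lexx e) eg).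
by rewrite mulr_ge0 ?subr_ge0 // agent_gain_le //; lra.
Qed.

Lemma item_gain_clamp_increment (s x y t : R) :
  0 <= s -> 0 <= y <= x -> (0 < y -> s + y <= t) -> t <= gamma ->
  y * (r - agent_gain t) <=
    item_gain (Num.min (s + x) gamma) - item_gain (Num.min s gamma).
Proof.
move=> s0 /andP[y0 yx] yt tg.
have [->|ypos] := eqVneq y 0.
  have x0 : 0 <= x by lra.
  rewrite mul0r subr_ge0.
  by rewrite le_item_gain ?le_min ?ge_min ?lexx ?orbT ?lerDl ?s0 ?x0.
have {}yt : s + y <= t by apply: yt; rewrite lt0r ypos y0.
rewrite (min_l (_ : s <= gamma)); last by lra.
have sy : s <= s + y by lra.
have := item_gain_increment s0 sy yt tg; rewrite addrC addKr => /le_trans-> //.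
rewrite lerD2r le_item_gain ?ge_min ?lexx ?orbT //; first lra.
by rewrite le_min lerD2l yx; lra.
Qed.

End GainSplit.

Lemma water_level_share (R : realType) (k : nat) (C : 'I_k -> R) (tau : R)
    (c : 'I_k) :
  \sum_(j < k) Num.min tau (C j) = Num.min 1 (\sum_(j < k) C j) ->
  tau < C c -> 1 <= k%:R * tau.
Proof.
move=> level tauC.
have lt_sum : \sum_(j < k) Num.min tau (C j) < \sum_(j < k) C j.
  rewrite (bigD1 c) //= [X in _ < X](bigD1 c) //=.
  apply: ltr_leD; first by rewrite min_l ?ltW.
  by apply: ler_sum => j _; rewrite ge_min lexx orbT.
have sum_gt1 : 1 < \sum_(j < k) C j.
  by rewrite ltNge; apply: contraTN lt_sum => /min_r <-; rewrite -level ltxx.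
have -> : k%:R * tau = \sum_(j < k) tau.
  by rewrite sumr_const card_ord mulr_natl.
have <- : \sum_(j < k) Num.min tau (C j) = 1 by rewrite level min_l ?ltW.
by apply: ler_sum => j _; rewrite ge_min lexx.
Qed.

Section EFTTStep.
Variables (R : realType) (k : nat) (A : finType) (cls : A -> 'I_k).
Variables (gamma : R) (L : A -> R) (lik : A -> bool).
Local Notation cap := (capI cls gamma L lik).

Lemma EFTT_step_ge0 (x : A -> R) : EFTT_step cls gamma L lik x ->
  forall a, 0 <= x a.
Proof.
move=> [tau [lam [mu [x1 [x2 [[_ _ _ x1E x2E] [_ xE]]]]]]] a.
rewrite xE; case: ifP => // la.
by rewrite x1E // x2E // addr_ge0 // le_max lexx.
Qed.

(* Had class [cls a] been saturated in Phase I, its water level would have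
   lifted [a] to gamma. *)
Lemma phaseI_unsaturated (tau : R) (lam : 'I_k -> R) (x1 : A -> R) (a : A) :
  \sum_(b | lik b && (cls b == cls a)) x1 b = Num.min tau (cap (cls a)) ->
  (forall b, lik b -> x1 b = Num.max 0 (lam (cls b) - L b)) ->
  lik a -> L a + x1 a < gamma -> tau < cap (cls a).
Proof.
move=> class_mass x1E la below; rewrite ltNge; apply/negP => /min_r sat.
rewrite sat in class_mass.
have x1a_ge0 : 0 <= x1 a by rewrite x1E // le_max lexx.
have x1a_ge : lam (cls a) - L a <= x1 a by rewrite x1E // le_max lexx orbT.
have [lam_lt|] := ltP (lam (cls a)) gamma; last lra.
move: class_mass; apply/eqP; rewrite lt_eqF //.
rewrite /capI (bigD1 a) ?la ?eqxx //= [X in _ < X](bigD1 a) ?la ?eqxx //=.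
apply: ltr_leD.
  rewrite max_r ?subr_ge0; last lra.
  by rewrite x1E // gt_max; apply/andP; split; lra.
apply: ler_sum => b /andP[/andP[lb /eqP cb] _]; rewrite x1E // cb.
by rewrite le_max2 ?lexx // lerD2r ltW.
Qed.

Lemma EFTT_step_class_share (x : A -> R) (a : A) :
  EFTT_step cls gamma L lik x -> lik a -> L a + x a < gamma ->
  exists y : A -> R,
    [/\ forall b, 0 <= y b <= x b,
        forall b, 0 < y b -> L b + y b <= L a + x a &
        1 <= k%:R * \sum_(b | cls b == cls a) y b].
Proof.
move=> step; have x_ge0 := EFTT_step_ge0 step.
move: step => [tau [lam [mu [x1 [x2 [[_ level class_mass x1E x2E] [_ xE]]]]]]].
have x1_ge0 b : lik b -> 0 <= x1 b by move=> lb; rewrite x1E // le_max lexx.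
have x1_le b : lik b -> x1 b <= x b.
  by move=> lb; rewrite xE lb lerDl x2E // le_max lexx.
move=> la below.
have unsat : tau < cap (cls a).
  apply: (phaseI_unsaturated (class_mass (cls a)) x1E la).
  by apply: le_lt_trans below; rewrite lerD2l x1_le.
exists (fun b => if lik b && (cls b == cls a) then x1 b else 0); split.
- move=> b; case: ifP => [/andP[lb _]|_]; last by rewrite lexx x_ge0.
  by rewrite x1_ge0 // x1_le.
- move=> b; case: ifP => [/andP[lb /eqP cb]|_]; last by rewrite ltxx.
  rewrite x1E // cb lt_max ltxx /= => /ltW pos; rewrite max_r //.
  have := x1_le a la; have : lam (cls a) - L a <= x1 a.
    by rewrite x1E // le_max lexx orbT.
  lra.
- rewrite [X in _ * X](_ : _ = \sum_(b | lik b && (cls b == cls a)) x1 b).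
    rewrite class_mass (min_l (ltW unsat)).
    exact: water_level_share level unsat.
  by rewrite -big_mkcondr; apply: eq_bigl => b; case: (_ == _); rewrite ?andbF.
Qed.

End EFTTStep.

Lemma mulr_sup_le (R : realType) (r B : R) (S : set R) :
  0 <= r -> 0 <= B -> S !=set0 -> (forall v, S v -> r * v <= B) ->
  r * sup S <= B.
Proof.
rewrite le_eqVlt => /orP[/eqP <-|r_gt0] B0 S0 SB; first by rewrite mul0r.
rewrite mulrC -ler_pdivlMr //; apply: ge_sup => // v Sv.
by rewrite ler_pdivlMr // mulrC SB.
Qed.

Section WeakDuality.
Variables (R : realType) (k m : nat) (A : finType).
Variables (cls : A -> 'I_k) (likes : A -> 'I_m -> bool) (i : 'I_k).
Variables (r : R) (beta : A -> R) (alpha : 'I_m -> R).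
Hypotheses (r_ge0 : 0 <= r) (beta_ge0 : forall a, 0 <= beta a)
  (alpha_ge0 : forall o, 0 <= alpha o)
  (cover : forall a o, cls a = i -> likes a o -> r <= beta a + alpha o).

Lemma Vstar_weak_duality (y : 'I_m -> R) : (forall o, 0 <= y o) ->
  r * Vstar cls likes i y <=
    \sum_(a | cls a == i) beta a + \sum_(o < m) alpha o * y o.
Proof.
move=> y_ge0; apply: mulr_sup_le => //.
- by rewrite addr_ge0 ?sumr_ge0 // => o _; rewrite mulr_ge0.
- exists 0, (fun _ _ => 0); split => //.
  + by move=> o; rewrite big1.
  + by move=> a; rewrite big1.
  + by rewrite big1 // => o _; rewrite big1.
move=> _ [z [z_ge0 z_edge z_item z_agent ->]].
rewrite mulr_sumr; apply: le_trans (_ : _ <= \sum_(o < m)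
  (\sum_(a : A) beta a * z o a + alpha o * \sum_(a : A) z o a)) _.
  apply: ler_sum => o _; rewrite !mulr_sumr -big_split /=.
  apply: ler_sum => a _; rewrite -mulrDl.
  case e: (likes a o && (cls a == i)); last by rewrite z_edge ?e // !mulr0.
  by move/andP: e => [lao /eqP cao]; rewrite ler_wpM2r ?cover.
rewrite big_split /= lerD //; last first.
  by apply: ler_sum => o _; rewrite ler_wpM2l.
rewrite exchange_big /= [X in _ <= X]big_mkcond /=.
apply: ler_sum => a _; rewrite -mulr_sumr.
case: ifP => [_|cai]; first by rewrite ler_piMr.
by rewrite big1 ?mulr0 // => o _; rewrite z_edge // cai andbF.
Qed.

(* Averaging the dual bounds over the k classes j uses sum_j y_j(X) <= 1. *)
Lemma prop_share_weak_duality :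
  k%:R * (r * prop_share R cls likes i) <=
    k%:R * \sum_(a | cls a == i) beta a + \sum_(o < m) alpha o.
Proof.
rewrite mulrA; apply: mulr_sup_le => //.
- by rewrite mulr_ge0.
- by rewrite addr_ge0 ?mulr_ge0 ?sumr_ge0.
- exists (min_classes i (fun j =>
      Vstar cls likes i (yvec cls j (fun _ _ => 0)))), (fun _ _ => 0).
  split => //; split => //.
  + by move=> o; rewrite big1.
  + by move=> a; rewrite big1.
move=> _ [x [[x_ge0 _ x_item _] ->]].
have y_ge0 j o : 0 <= yvec cls j x o by rewrite sumr_ge0.
apply: le_trans (_ : _ <= \sum_(j < k) r * Vstar cls likes i (yvec cls j x)) _.
  rewrite [k%:R * r]mulrC -mulrA -mulr_sumr ler_wpM2l //.
  rewrite -[X in X%:R](card_ord k) mulr_natl -sumr_const.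
  by apply: ler_sum => j _; exact: bigmin_le.
apply: le_trans (_ : _ <= \sum_(j < k) (\sum_(a | cls a == i) beta a +
    \sum_(o < m) alpha o * yvec cls j x o)) _.
  by apply: ler_sum => j _; exact: Vstar_weak_duality.
rewrite big_split /= sumr_const card_ord mulr_natl lerD2l.
rewrite exchange_big /=; apply: ler_sum => o _; rewrite -mulr_sumr.
have -> : \sum_(j < k) yvec cls j x o = \sum_a x o a.
  by rewrite (partition_big cls xpredT).
by rewrite ler_piMr.
Qed.

End WeakDuality.

Section DualSolution.
Variables (R : realType) (gamma : R) (k m : nat) (A : finType).
Variables (cls : A -> 'I_k) (likes : A -> 'I_m -> bool) (xt : A -> 'I_m -> R).
Hypotheses (gamma_ge0 : 0 <= gamma) (gamma_le1 : gamma <= 1).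
Hypothesis EFTT_xt : is_EFTT cls likes gamma xt.
Variable i : 'I_k.
Local Notation r := (rho_int gamma).
Local Notation clamp t := (Num.min t gamma).

Definition load (a : A) (n : nat) : R := \sum_(o < m | (o < n)%N) xt a o.
Definition total_load (a : A) : R := \sum_(o < m) xt a o.

Definition dual_agent (a : A) : R := agent_gain gamma (clamp (total_load a)).
Definition dual_item (o : 'I_m) : R := k%:R *
  \sum_(b | cls b == i)
    (item_gain gamma (clamp (load b o.+1)) -
     item_gain gamma (clamp (load b o))).

Lemma xt_ge0 a o : 0 <= xt a o.
Proof. exact: EFTT_step_ge0 (EFTT_xt o) a. Qed.

Lemma load0 a : load a 0 = 0.
Proof. by rewrite /load big_pred0. Qed.

Lemma loadS a (o : 'I_m) : load a o.+1 = load a o + xt a o.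
Proof.
rewrite /load (bigD1 o) //= addrC; congr (_ + _).
by apply: eq_bigl => o'; rewrite ltnS andbC -val_eqE -ltn_neqAle.
Qed.

Lemma load_total a : load a m = total_load a.
Proof. by apply: eq_bigl => o; rewrite ltn_ord. Qed.

Lemma load_ge0 a n : 0 <= load a n.
Proof. by rewrite sumr_ge0 // => o _; exact: xt_ge0. Qed.

Lemma load_le_total a n : load a n <= total_load a.
Proof.
rewrite /load /total_load [X in _ <= X](bigID (fun o : 'I_m => (o < n)%N)) /=.
by rewrite lerDl sumr_ge0 // => o _; exact: xt_ge0.
Qed.

Lemma total_load_ge0 a : 0 <= total_load a.
Proof. by rewrite -(load_total a) load_ge0. Qed.

Lemma clamp_ge0 t : 0 <= t -> 0 <= clamp t.
Proof. by move=> t0; rewrite le_min t0 gamma_ge0. Qed.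

Lemma clamp_le t : clamp t <= gamma.
Proof. by rewrite ge_min lexx orbT. Qed.

Lemma dual_agent_ge0 a : 0 <= dual_agent a.
Proof. by rewrite agent_gain_ge0 ?clamp_ge0 ?total_load_ge0 ?clamp_le. Qed.

Lemma dual_item_ge0 o : 0 <= dual_item o.
Proof.
rewrite mulr_ge0 // sumr_ge0 // => b _; rewrite subr_ge0.
rewrite le_item_gain ?clamp_ge0 ?load_ge0 ?clamp_le //.
by rewrite le_min2 // loadS lerDl xt_ge0.
Qed.

(* If a ends below gamma, Phase I gave class i at least 1/k of o, on agents
   whose loads stay below total_load a, where item_gain grows at rate
   r - agent_gain (total_load a). *)
Lemma dual_feasible a o : cls a = i -> likes a o ->
  r <= dual_agent a + dual_item o.
Proof.
move=> ca la; have [T_ge|T_lt] := leP gamma (total_load a).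
  by rewrite /dual_agent min_r // agent_gain_gamma lerDl dual_item_ge0.
have below : load a o + xt a o < gamma.
  by rewrite -loadS; apply: le_lt_trans T_lt; exact: load_le_total.
have [y [y_le y_below share]] := EFTT_step_class_share (EFTT_xt o) la below.
rewrite ca in share.
set D := r - agent_gain gamma (total_load a).
have D_ge0 : 0 <= D.
  by rewrite subr_ge0 agent_gain_le ?total_load_ge0 // ltW.
have incr b : cls b == i -> y b * D <=
    item_gain gamma (clamp (load b o.+1)) - item_gain gamma (clamp (load b o)).
  move=> _; rewrite loadS; apply: item_gain_clamp_increment => //.
  - exact: load_ge0.
  - by move=> /y_below; rewrite -loadS => /le_trans->//; exact: load_le_total.
  - exact: ltW.
rewrite /dual_agent (min_l (ltW T_lt)) -lerBlDl.
apply: le_trans (_ : k%:R * (\sum_(b | cls b == i) y b) * D <= _).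
  by rewrite -[X in X <= _]mul1r ler_wpM2r.
by rewrite -mulrA ler_wpM2l // mulr_suml ler_sum.
Qed.

Lemma dual_objective :
  k%:R * \sum_(a | cls a == i) dual_agent a + \sum_(o < m) dual_item o =
    k%:R * \sum_(a | cls a == i) p_ocs (clamp (total_load a)).
Proof.
rewrite /dual_item -mulr_sumr exchange_big /= -mulrDr -big_split /=.
congr (_ * _); apply: eq_bigr => a _.
rewrite -(big_mkord xpredT (fun n => item_gain gamma (clamp (load a n.+1)) -
  item_gain gamma (clamp (load a n)))).
rewrite telescope_sumr // load0 load_total (min_l gamma_ge0) item_gain0 subr0.
by rewrite /dual_agent /item_gain addrC subrK.
Qed.

Lemma rho_int_prop_share_le :
  r * prop_share R cls likes i <= \sum_(a | cls a == i) p_ocs (total_load a).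
Proof.
have k_gt0 : 0 < k%:R :> R.
  by rewrite ltr0n (leq_ltn_trans (leq0n i) (ltn_ord i)).
rewrite -(ler_pM2l k_gt0).
apply: le_trans (prop_share_weak_duality (rho_int_ge0 gamma_ge0 gamma_le1)
  dual_agent_ge0 dual_item_ge0 dual_feasible) _.
rewrite dual_objective ler_wpM2l // ler_sum // => a _.
by rewrite le_p_ocs ?clamp_ge0 ?total_load_ge0 // ge_min lexx.
Qed.

End DualSolution.

Section Rounding.
Variables (R : realType) (k m : nat) (A : finType).
Variables (cls : A -> 'I_k) (likes : A -> 'I_m -> bool) (xt : A -> 'I_m -> R).
Variables (d : measure_display) (Omega : measurableType d).
Variables (P : probability Omega R) (sel mt : 'I_m -> Omega -> option A).
Hypothesis rounding : is_rounding likes sel mt.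
Hypothesis measurable_mt : forall o a, measurable [set w | mt o w = Some a].
Variable i : 'I_k.

Definition selected (a : A) : set Omega := [set w | exists o, sel o w = Some a].

Lemma selected_matched w a : selected a w -> exists o, mt o w = Some a.
Proof.
case=> o sel_o; have [+ _] := rounding o w; rewrite sel_o.
case: (boolP (matched_before mt w a o)) => [|_ /(_ isT) mt_o]; last by exists o.
by move=> /existsP[q /andP[_ /eqP mt_q]] _; exists q.
Qed.

Lemma measurable_Vclass : measurable_fun setT (Vclass R cls mt i).
Proof.
have -> : Vclass R cls mt i = fun w => \sum_(o <- index_enum 'I_m)
    \sum_(a <- index_enum A)
      (if cls a == i then \1_[set w | mt o w = Some a] w else 0).
  apply/funext => w; apply: eq_bigr => o _; rewrite big_mkcond /=.
  apply: eq_bigr => a _; case: ifP => // _; rewrite indicE.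
  by case: eqP => mt_a; [rewrite mem_set | rewrite memNset].
apply: measurable_sum => o; apply: measurable_sum => a.
by case: (cls a == i); [exact: measurable_indic | exact: measurable_cst].
Qed.

Lemma indic_selected_le_Vclass w :
  \sum_(a | cls a == i) \1_(selected a) w <= Vclass R cls mt i w.
Proof.
rewrite /Vclass exchange_big /=; apply: ler_sum => a _.
rewrite indicE; case: (boolP (w \in selected a)) => [/set_mem|_]; last first.
  by rewrite sumr_ge0.
case/selected_matched => o mt_o.
by rewrite (bigD1 o) //= mt_o eqxx lerDl sumr_ge0.
Qed.

Lemma OCS_rounding_expectation : is_OCS_run P xt sel ->
  ((\sum_(a | cls a == i) p_ocs (\sum_(o < m) xt a o))%:E <=
    \int[P]_w (Vclass R cls mt i w)%:E)%E.
Proof.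
move=> [measurable_sel _ _ OCS_p].
have measurable_selected a : measurable (selected a).
  have -> : selected a = \bigcup_(o in [set: 'I_m]) [set w | sel o w = Some a].
    by apply/seteqP; split => w /= -[] o; [exists o | move=> _; exists o].
  by apply: fin_bigcup_measurable => // o _; exact: measurable_sel.
rewrite -sumEFin.
apply: le_trans (_ : (\sum_(a | cls a == i) P (selected a) <= _)%E).
  by apply: lee_sum => a _; exact: OCS_p.
have -> : (\sum_(a | cls a == i) P (selected a) = \int[P]_w
    \sum_(a <- [seq a <- index_enum A | cls a == i]) (\1_(selected a) w)%:E)%E.
  rewrite -big_filter ge0_integral_sum //; last first.
    by move=> a; apply/measurable_EFinP; exact: measurable_indic.
  by apply: eq_bigr => a _; rewrite integral_indic // setIT.
apply: ge0_le_integral => //.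
- by move=> w _; rewrite sume_ge0 // => a _; rewrite lee_fin.
- apply: emeasurable_sum => a.
  by apply/measurable_EFinP; exact: measurable_indic.
- exact/measurable_EFinP/measurable_Vclass.
- by move=> w _; rewrite big_filter sumEFin lee_fin indic_selected_le_Vclass.
Qed.

End Rounding.

Theorem theorem7 (R : realType) (gamma : R) (k m : nat) (A : finType)
  (cls : A -> 'I_k) (likes : A -> 'I_m -> bool) (xt : A -> 'I_m -> R)
  (d : measure_display) (Omega : measurableType d) (P : probability Omega R)
  (sel mt : 'I_m -> Omega -> option A) :
  0 <= gamma <= 1 ->
  is_EFTT cls likes gamma xt ->
  is_OCS_run P xt sel ->
  is_rounding likes sel mt ->
  (forall o a, measurable [set w | mt o w = Some a]) ->
  forall i : 'I_k,
    (rho gamma * (prop_share R cls likes i)%:E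
       <= \int[P]_w (Vclass R cls mt i w)%:E)%E.
Proof.
move=> /andP[gamma_ge0 gamma_le1] EFTT_xt OCS rounding measurable_mt i.
rewrite rhoE -EFinM.
apply: le_trans (OCS_rounding_expectation cls rounding measurable_mt i OCS).
by rewrite lee_fin; exact: rho_int_prop_share_le.
Qed.
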